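(* Let $k\in\mathbb N^+$, $n\ge 2$, $\mathbf C=(c_0,\dots,c_k)\in\{0,1\}^{k+1}$ with $\mathbf C\neq(0,\dots,0)$. Define the polynomials $$x_{\mathbf C}^{n\uparrow}=x\prod_{j=2}^{n}\big((j-1)^kF_j(\mathbf C)x+(j-1)^kF_j(\mathbf C')\big),\qquad x_{\mathbf C}^{n\downarrow}=x\prod_{j=2}^{n}\big((j-1)^kF_j(\mathbf C)x-(j-1)^kF_j(\mathbf C')\big),$$ and $O^u_{\mathbf C}(n,m)=O_{\mathbf C}(n,m+c_k-1)$, $O^s_{\mathbf C}(n,m)=(-1)^{n+m}O_{\mathbf C}(n,m+c_k-1)$. Then $$x_{\mathbf C}^{n\uparrow}=\sum_{m=0}^nO^u_{\mathbf C}(n,m)x^m,\qquad x_{\mathbf C}^{n\downarrow}=\sum_{m=0}^nO^s_{\mathbf C}(n,m)x^m;$$ the zeros of $x_{\mathbf C}^{n\uparrow}$ are $x=0$ and $x=-F_j(\mathbf C')/F_j(\mathbf C)$ for $j=2,\dots,n$, and the zeros of $x_{\mathbf C}^{n\downarrow}$ are $x=0$ and $x=F_j(\mathbf C')/F_j(\mathbf C)$ for $j=2,\dots,n$.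
   Context: Put $\mathbf C'=(1,\dots,1)-\mathbf C$. Consider $k$-tuples $(\pi_1,\dots,\pi_k)$ of permutations of $\{1,\dots,n\}$. A position $\alpha$ is a record of a permutation $\pi$ if $\pi(\alpha)<\pi(\alpha')$ for every $\alpha'<\alpha$ (position $1$ is always a record). For a tuple, let $l_\alpha$ be the number of $\beta\in\{1,\dots,k\}$ for which $\alpha$ is a record of $\pi_\beta$. The $\mathbf C$ sequential optimization set is $S=\{\alpha:c_{l_\alpha}=1\}$, with weight $|S|$; for an integer $m$, $O_{\mathbf C}(n,m)$ is the number of $k$-tuples whose weight equals $m$. For $j\ge2$ and $X=(x_0,\dots,x_k)\in\mathbb R^{k+1}$, $F_j(X)=\sum_{\beta=0}^k\binom{k}{\beta}\frac{x_\beta}{(j-1)^\beta}$. *)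

From HB Require Import structures.
From mathcomp Require Import all_boot all_order all_algebra all_fingroup.
Set Implicit Arguments. Unset Strict Implicit. Unset Printing Implicit Defensive.
Import Order.TTheory GRing.Theory Num.Theory.

(* Positions 1..n are encoded as 'I_n (0-based); values likewise. *)

Definition is_record (n : nat) (p : 'S_n) (a : 'I_n) : bool :=
  [forall a' : 'I_n, (a' < a)%N ==> (p a < p a')%N].

Definition lcount (n k : nat) (t : {ffun 'I_k -> 'S_n}) (a : 'I_n) : nat :=
  #|[set b : 'I_k | is_record (t b) a]|.

(* C = (c_0,...,c_k) as a function 'I_(k+1) -> bool; c_l = C (inord l). *)
Definition optset (n k : nat) (C : {ffun 'I_k.+1 -> bool})
    (t : {ffun 'I_k -> 'S_n}) : {set 'I_n} :=
  [set a : 'I_n | C (inord (lcount t a))].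

Definition weight (n k : nat) (C : {ffun 'I_k.+1 -> bool})
    (t : {ffun 'I_k -> 'S_n}) : nat := #|optset C t|.

Definition Ocount (n k : nat) (C : {ffun 'I_k.+1 -> bool}) (m : int) : nat :=
  #|[set t : {ffun 'I_k -> 'S_n} | Posz (weight C t) == m]|.

Local Open Scope ring_scope.

Definition Fj (R : fieldType) (k j : nat) (X : 'I_k.+1 -> R) : R :=
  \sum_(b < k.+1) 'C(k, b)%:R * X b / (j.-1)%:R ^+ b.
Arguments Fj {R} k j X.

Definition Cvec (R : fieldType) (k : nat) (C : {ffun 'I_k.+1 -> bool})
  : 'I_k.+1 -> R := fun b => (C b)%:R.
Definition Cvec' (R : fieldType) (k : nat) (C : {ffun 'I_k.+1 -> bool})
  : 'I_k.+1 -> R := fun b => 1 - (C b)%:R.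

Definition c_k (k : nat) (C : {ffun 'I_k.+1 -> bool}) : bool := C ord_max.

Definition xup (R : fieldType) (n k : nat) (C : {ffun 'I_k.+1 -> bool}) : {poly R} :=
  'X * \prod_(2 <= j < n.+1)
        (((j.-1)%:R ^+ k * Fj k j (Cvec R C)) *: 'X
         + ((j.-1)%:R ^+ k * Fj k j (Cvec' R C))%:P).

Definition xdown (R : fieldType) (n k : nat) (C : {ffun 'I_k.+1 -> bool}) : {poly R} :=
  'X * \prod_(2 <= j < n.+1)
        (((j.-1)%:R ^+ k * Fj k j (Cvec R C)) *: 'X
         - ((j.-1)%:R ^+ k * Fj k j (Cvec' R C))%:P).

Definition Ou (n k : nat) (C : {ffun 'I_k.+1 -> bool}) (m : nat) : nat :=
  Ocount n C (Posz m + Posz (c_k C) - 1).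

Definition Os (n k : nat) (C : {ffun 'I_k.+1 -> bool}) (m : nat) : int :=
  (-1) ^+ (n + m) * Posz (Ocount n C (Posz m + Posz (c_k C) - 1)).

(* Each position a of a random permutation of 'I_n is a record with probability 1/(a+1),
   independently of the other positions; inserting the last position shows
     \sum_p \prod_a w_a(a is a record of p) = \prod_a (w_a(true) + a w_a(false)).
   Hence the k-tuples with prescribed sets of record-bearing permutations at each position
   are counted by a product, and the weight generating polynomial \sum_t X^(weight t) is
   \prod_(a < n) \sum_l binom(k,l) a^(k-l) X^(c_l).  Its factor for a = 0 is X^(c_k), and for
   a = j - 1 >= 1 it is the linear polynomial (j-1)^k (F_j(C) X + F_j(C')).  So x^{n up} is
   X^(1 - c_k) times the generating polynomial, x^{n down}(x) = (-1)^n x^{n up}(-x), and the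
   roots are read off the linear factors, whose leading coefficients F_j(C) are positive as
   C <> 0. *)

From HB Require Import structures.
From mathcomp Require Import all_boot all_order all_algebra all_fingroup.
From mathcomp Require Import ring zify.
Import Order.TTheory GRing.Theory Num.Theory.

Section PermRecords.
Variable n : nat.

Lemma is_record_lift_perm_lift (j : 'I_n.+1) (s : 'S_n) (a : 'I_n) :
  is_record (lift_perm ord_max j s) (lift ord_max a) = is_record s a.
Proof.
have lt_lift (h : 'I_n.+1) (x y : 'I_n) : (lift h x < lift h y) = (x < y).
  by rewrite /= !ltnNge leq_bump2.
apply/forallP/forallP => rec_a a'; apply/implyP.
  have := rec_a (lift ord_max a'); rewrite !lift_perm_lift !lt_lift.
  by move/implyP.
case: (unliftP ord_max a') => [a1 -> | -> ].
  by rewrite !lift_perm_lift !lt_lift => /(implyP (rec_a a1)).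
by rewrite lift_max /= ltnNge ltnW.
Qed.

Lemma is_record_lift_perm_max (j : 'I_n.+1) (s : 'S_n) :
  is_record (lift_perm ord_max j s) ord_max = (j == ord0).
Proof.
rewrite /is_record lift_perm_id; apply/forallP/eqP => [rec_max | ->] /=; last first.
  move=> a'; apply/implyP; case: (unliftP ord_max a') => [a1|] -> /=.
    by rewrite lift_perm_lift.
  by rewrite ltnn.
apply/val_inj/eqP; rewrite /= -leqn0 leqNgt; apply/negP => j_gt0.
have n_gt0 : 0 < n by move: (ltn_ord j); lia.
have := rec_max (lift ord_max (s^-1 (Ordinal n_gt0))%g).
rewrite lift_max ltn_ord lift_perm_lift permKV /=.
by rewrite /bump (leqNgt j 0) j_gt0.
Qed.

Lemma sum_perm_lift_perm (R : nmodType) (j : 'I_n.+1) (F : 'S_n.+1 -> R) :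
  (\sum_(p : 'S_n.+1 | p ord_max == j) F p = \sum_(s : 'S_n) F (lift_perm ord_max j s))%R.
Proof.
rewrite (reindex (lift_perm ord_max j)); last first.
  pose ulsf (s : 'S_n.+1) k := odflt k (unlift (s ord_max) (s (lift ord_max k))).
  have ulsfK (s : 'S_n.+1) (k : 'I_n) : lift (s ord_max) (ulsf s k) = s (lift ord_max k).
    rewrite /ulsf; have:= neq_lift ord_max k.
    by rewrite -(can_eq (permK s)) => /unlift_some[] ? ? ->.
  have inj_ulsf (s : 'S_n.+1) : injective (ulsf s).
    apply: can_inj (fun k => odflt k (unlift ord_max (s^-1%g (lift (s ord_max) k)))) _ => k.
    by rewrite ulsfK !permK liftK.
  exists (fun s => perm (inj_ulsf s)) => [s _ | s /eqP s_max].
    by apply/permP=> k; rewrite permE /ulsf lift_perm_lift lift_perm_id liftK.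
  apply/permP=> k; case: (unliftP ord_max k) => [k'|] ->; rewrite ?lift_perm_id //.
  by rewrite lift_perm_lift -s_max permE ulsfK.
by apply: eq_bigl => s; rewrite lift_perm_id eqxx.
Qed.

End PermRecords.

Lemma sum_prod_is_record (R : comPzSemiRingType) n (w : 'I_n -> bool -> R) :
  (\sum_(p : 'S_n) \prod_(a < n) w a (is_record p a)
   = \prod_(a < n) (w a true + w a false *+ a))%R.
Proof.
elim: n w => [|n IHn] w.
  by rewrite big_ord0 (eq_bigr (fun=> 1%R)) ?sumr_const ?card_Sn // => p; rewrite big_ord0.
pose w' (a : 'I_n) := w (widen_ord (leqnSn n) a).
rewrite (partition_big (fun p : 'S_n.+1 => p ord_max) predT) //= [RHS]big_ord_recr /=.
rewrite (eq_bigr (fun j => w ord_max (j == ord0) *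
                   \sum_(s : 'S_n) \prod_(a < n) w' a (is_record s a)))%R; last first.
  move=> j _; rewrite sum_perm_lift_perm mulr_sumr; apply: eq_bigr => s _.
  rewrite big_ord_recr /= is_record_lift_perm_max mulrC; congr (_ * _)%R.
  apply: eq_bigr => a _; rewrite /w'.
  have -> : widen_ord (leqnSn n) a = lift ord_max a.
    by apply: val_inj; rewrite /= /bump leqNgt ltn_ord.
  by rewrite is_record_lift_perm_lift.
rewrite -big_distrl /= IHn mulrC; congr (_ * _)%R.
by rewrite big_ord_recl eqxx (eq_bigr (fun=> w ord_max false)) ?sumr_const ?card_ord.
Qed.

Lemma card_perm_records n (S : {set 'I_n}) :
  #|[set p : 'S_n | [set a | is_record p a] == S]| = \prod_(a in ~: S) a.
Proof.
rewrite -sum1dep_card big_mkcond /=.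
transitivity (\sum_(p : 'S_n) \prod_(a < n) (is_record p a == (a \in S)) : nat).
  apply: eq_bigr => p _; case: eqP => [<- | /eqP neqS].
    by rewrite big1 // => a _; rewrite inE eqxx.
  have [a /negbTE rec_a] : exists a, (is_record p a) != (a \in S).
    apply/existsP; apply: contraR neqS => /existsPn eqS.
    by apply/eqP/setP => a; move: (eqS a); rewrite inE negbK => /eqP.
  by rewrite (bigD1 a) //= rec_a.
rewrite (sum_prod_is_record nat n (fun a x => (x == (a \in S)) : nat)).
rewrite [RHS]big_mkcond; apply: eq_bigr => a _.
by rewrite inE; case: (a \in S); rewrite /= ?mul0rn ?addr0 ?add0r ?natn.
Qed.

Definition record_set {n k : nat} (t : {ffun 'I_k -> 'S_n}) (a : 'I_n) : {set 'I_k} :=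
  [set b | is_record (t b) a].

Lemma card_record_sets n k (M : 'I_n -> {set 'I_k}) :
  #|[set t : {ffun 'I_k -> 'S_n} | [forall a, record_set t a == M a]]|
  = \prod_(a < n) a ^ #|~: M a|.
Proof.
pose N b := [set a | b \in M a].
have eq_tuple (t : {ffun 'I_k -> 'S_n}) :
    [forall a, record_set t a == M a]
    = (t \in family (fun b => [set p | [set a | is_record p a] == N b])).
  apply/forallP/familyP => eqM x; rewrite ?inE; apply/eqP/setP => y; rewrite !inE.
    by move/eqP/setP: (eqM y) => /(_ x); rewrite !inE.
  by move: (eqM y); rewrite inE => /eqP/setP/(_ x); rewrite !inE.
rewrite cardsE (eq_card eq_tuple) card_family foldrE big_map big_enum (eq_bigl xpredT) //.
under eq_bigr do rewrite card_perm_records big_mkcond.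
rewrite exchange_big; apply: eq_bigr => a _.
by rewrite -prod_nat_const [RHS]big_mkcond; apply: eq_bigr => b _; rewrite !inE.
Qed.

Local Open Scope ring_scope.

Lemma sum_prod_record_sets (R : comPzSemiRingType) n k (g : 'I_n -> {set 'I_k} -> R) :
  \sum_(t : {ffun 'I_k -> 'S_n}) \prod_(a < n) g a (record_set t a)
  = \prod_(a < n) \sum_(B : {set 'I_k}) g a B *+ a ^ #|~: B|.
Proof.
rewrite bigA_distr_bigA /= (partition_big (fun t => [ffun a => record_set t a]) predT) //=.
apply: eq_bigr => M _; rewrite prodrMn -card_record_sets -sumr_const.
apply: eq_big => [t | t /eqP <-]; last by apply: eq_bigr => a _; rewrite ffunE.
rewrite inE; apply/eqP/forallP => [<- a | eqM]; first by rewrite ffunE.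
by apply/ffunP => a; rewrite ffunE; apply/eqP.
Qed.

Lemma sum_set_card (R : nmodType) k c (f : 'I_k.+1 -> R) :
  \sum_(B : {set 'I_k}) f (inord #|B|) *+ c ^ #|~: B|
  = \sum_(l < k.+1) f l *+ ('C(k, l) * c ^ (k - l)).
Proof.
rewrite (partition_big (fun B : {set 'I_k} => inord #|B| : 'I_k.+1) predT) //=.
apply: eq_bigr => l _.
have card_le (B : {set 'I_k}) : (#|B| <= k)%N.
  by rewrite -[X in (_ <= X)%N](card_ord k) max_card.
transitivity (\sum_(B in [set B : {set 'I_k} | #|B| == l]) f l *+ c ^ (k - l)).
  apply: eq_big => B; first by rewrite inE -(inj_eq val_inj) /= inordK ?ltnS.
  by move=> /eqP <-; rewrite inordK ?ltnS // [#|~: B|]cardsCs setCK card_ord.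
by rewrite sumr_const card_draws card_ord -mulrnA mulnC.
Qed.

Definition weight_gf (R : nzSemiRingType) n {k} (C : {ffun 'I_k.+1 -> bool}) : {poly R} :=
  \sum_(t : {ffun 'I_k -> 'S_n}) 'X^(weight C t).

Definition record_factor (R : nzSemiRingType) {k} (C : {ffun 'I_k.+1 -> bool}) (a : nat)
    : {poly R} :=
  \sum_(l < k.+1) 'X^(C l) *+ ('C(k, l) * a ^ (k - l)).

Lemma weight_gf_prod (R : comNzSemiRingType) n k (C : {ffun 'I_k.+1 -> bool}) :
  weight_gf R n C = \prod_(a < n) record_factor R C a.
Proof.
rewrite /weight_gf (eq_bigr (fun t => \prod_(a < n) 'X^(C (inord #|record_set t a|)))).
  rewrite (sum_prod_record_sets _ _ _ (fun _ B => 'X^(C (inord #|B|)))).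
  by apply: eq_bigr => a _; apply: sum_set_card.
move=> t _; rewrite /weight /optset -prodr_const big_mkcond.
by apply: eq_bigr => a _; rewrite inE /lcount; case: (C _).
Qed.

Lemma record_factor0 (R : nzSemiRingType) k (C : {ffun 'I_k.+1 -> bool}) :
  record_factor R C 0 = 'X^(c_k C).
Proof.
rewrite /record_factor big_ord_recr /= subnn binn big1 ?add0r // => l _.
by rewrite exp0n ?subn_gt0 // muln0.
Qed.

Lemma scale_Fj (R : fieldType) k j (X : 'I_k.+1 -> R) : (j.-1)%:R != 0 :> R ->
  (j.-1)%:R ^+ k * Fj k j X = \sum_(l < k.+1) X l *+ ('C(k, l) * j.-1 ^ (k - l)).
Proof.
move=> j1_neq0; rewrite /Fj mulr_sumr; apply: eq_bigr => l _.
rewrite -[in RHS]mulr_natr natrM natrX expfB_cond; first by ring.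
by move: j1_neq0 => /negbTE ->; rewrite add0n -ltnS.
Qed.

Lemma record_factor_Fj (R : fieldType) k (C : {ffun 'I_k.+1 -> bool}) j :
  (j.-1)%:R != 0 :> R ->
  record_factor R C j.-1 = ((j.-1)%:R ^+ k * Fj k j (Cvec R C)) *: 'X
                           + ((j.-1)%:R ^+ k * Fj k j (Cvec' R C))%:P.
Proof.
move=> j1_neq0; rewrite !scale_Fj // scaler_suml rmorph_sum -big_split /=.
apply: eq_bigr => l _; rewrite /Cvec /Cvec'; case: (C l) => /=.
  by rewrite subrr mul0rn addr0 scaler_nat.
by rewrite mul0rn scale0r add0r subr0 polyCMn.
Qed.

Lemma weight_gf_factor (R : numFieldType) n k (C : {ffun 'I_k.+1 -> bool}) :
  (0 < n)%N ->
  weight_gf R n C = 'X^(c_k C) * \prod_(2 <= j < n.+1)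
        (((j.-1)%:R ^+ k * Fj k j (Cvec R C)) *: 'X
         + ((j.-1)%:R ^+ k * Fj k j (Cvec' R C))%:P).
Proof.
move=> n_gt0; rewrite weight_gf_prod -(big_mkord xpredT (record_factor R C)).
rewrite big_ltn // record_factor0; congr (_ * _); rewrite [RHS]big_add1 /=.
apply: eq_big_nat => a /andP[a_gt0 _].
by rewrite -[a in LHS]/(a.+1.-1) record_factor_Fj // pnatr_eq0 -lt0n.
Qed.

Lemma coef_weight_gf (R : nzSemiRingType) n k (C : {ffun 'I_k.+1 -> bool}) w :
  (weight_gf R n C)`_w = (Ocount n C w)%:R.
Proof.
rewrite /weight_gf /Ocount coef_sum -sum1dep_card natr_sum [RHS]big_mkcond /=.
by apply: eq_bigr => t _; rewrite coefXn eqz_nat eq_sym; case: eqP.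
Qed.

Lemma Ocount_neg n k (C : {ffun 'I_k.+1 -> bool}) m : Ocount n C (Negz m) = 0%N.
Proof. by apply: eq_card0 => t; rewrite inE. Qed.

Section LinearProducts.
Variables (R : comNzRingType) (a b : nat -> R).

Lemma size_X_prod_linear_leq (s : seq nat) :
  (size ('X * \prod_(j <- s) (a j *: 'X + (b j)%:P))%R <= (size s).+2)%N.
Proof.
have size_lin j : (size (a j *: 'X + (b j)%:P)%R <= 2)%N.
  rewrite (leq_trans (size_polyD _ _)) // geq_max (leq_trans (size_polyC_leq1 _)) //.
  by rewrite andbT (leq_trans (size_scale_leq _ _)) ?size_polyX.
elim: s => [|j s IHs]; first by rewrite big_nil mulr1 size_polyX.
rewrite big_cons mulrCA; apply: leq_trans (size_polyMleq _ _) _.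
by move: (size_lin j) IHs => /= le_lin le_P; rewrite -subn1 leq_subLR (leq_add le_lin le_P).
Qed.

Lemma comp_oppX_X_prod_linear (s : seq nat) :
  ('X * \prod_(j <- s) (a j *: 'X + (b j)%:P)) \Po (- 'X)
  = (-1) ^+ (size s).+1 * ('X * \prod_(j <- s) (a j *: 'X - (b j)%:P)).
Proof.
rewrite comp_polyM comp_polyX.
elim: s => [|j s IHs]; first by rewrite !big_nil comp_polyC !mulr1 mulN1r.
rewrite !big_cons comp_polyM comp_polyD comp_polyZ comp_polyX comp_polyC /=.
by rewrite mulrCA IHs !exprS -!mul_polyC; ring.
Qed.

End LinearProducts.

Lemma root_X_prod_linear (F : fieldType) (a b : nat -> F) (s : seq nat) x :
  {in s, forall j, a j != 0} ->
  root ('X * \prod_(j <- s) (a j *: 'X + (b j)%:P)) x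
  <-> x = 0 \/ exists2 j, j \in s & x = - (b j / a j).
Proof.
move=> a_neq0; rewrite /root hornerM hornerX horner_prod mulf_eq0 prodf_seq_eq0.
split=> [/orP[/eqP-> | /hasP[j sj /=]] | [-> | [j sj ->]]]; [by left | | by rewrite eqxx |].
  rewrite !hornerE => /eqP lin_x; right; exists j => //.
  apply/(mulfI (a_neq0 j sj)); rewrite mulrN mulrCA divff ?a_neq0 // mulr1.
  by apply/eqP; rewrite -addr_eq0 lin_x.
apply/orP; right; apply/hasP; exists j => //=.
by rewrite !hornerE mulrN mulrCA divff ?a_neq0 // mulr1 addNr.
Qed.

Lemma Fj_Cvec_gt0 (R : numFieldType) k (C : {ffun 'I_k.+1 -> bool}) j :
  (2 <= j)%N -> C != [ffun => false] -> 0 < Fj k j (Cvec R C).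
Proof.
move=> j_ge2 C_neq0.
have [l Cl] : exists l, C l.
  apply/existsP; apply: contraR C_neq0 => /existsPn C0; apply/eqP/ffunP => l.
  by rewrite ffunE; apply/negbTE/C0.
have j1_gt0 : 0 < (j.-1)%:R :> R by rewrite ltr0n; lia.
rewrite /Fj (bigD1 l) //= ltr_wpDr //.
  apply: sumr_ge0 => i _; rewrite /Cvec; case: (C i); rewrite ?mulr0 ?mul0r //.
  by rewrite mulr1 divr_ge0 ?ler0n ?exprn_ge0 ?ltW.
by rewrite /Cvec Cl mulr1 divr_gt0 ?exprn_gt0 // ltr0n bin_gt0 -ltnS.
Qed.

Section UpDownPolynomials.
Variables (R : numFieldType) (k n : nat) (C : {ffun 'I_k.+1 -> bool}).
Hypothesis n_gt0 : (0 < n)%N.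

Lemma coef_xup m : (xup R n C)`_m = (Ou n C m)%:R.
Proof.
have shift : 'X^(c_k C) * xup R n C = 'X * weight_gf R n C.
  by rewrite weight_gf_factor // mulrCA.
move: (congr1 (coefp (m + c_k C)) shift) => /=.
rewrite coefXM coefXnM coef_weight_gf ltnNge leq_addl addnK /= => ->.
rewrite /Ou -PoszD; case: (m + c_k C)%N => [|mc] /=; first by rewrite Ocount_neg.
by rewrite -addn1 PoszD addrK.
Qed.

Lemma xup_expansion : xup R n C = \sum_(m < n.+1) (Ou n C m)%:R *: 'X^m.
Proof.
rewrite -(poly_def n.+1 (fun m => (Ou n C m)%:R)); apply/polyP => m; rewrite coef_poly.
case: ltnP => [_ | m_gt]; first exact: coef_xup.
apply: nth_default; apply: leq_trans m_gt.
by rewrite (leq_trans (size_X_prod_linear_leq _ _ _ _)) // size_iota; lia.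
Qed.

Lemma xup_comp_oppX : xup R n C \Po (- 'X) = (-1) ^+ n * xdown R n C.
Proof. by rewrite comp_oppX_X_prod_linear size_iota; congr (_ ^+ _ * _); lia. Qed.

Lemma xdown_expansion : xdown R n C = \sum_(m < n.+1) (Os n C m)%:~R *: 'X^m.
Proof.
have -> : xdown R n C = (-1) ^+ n * (xup R n C \Po (- 'X)).
  by rewrite xup_comp_oppX mulrA -exprD -signr_odd addnn odd_double mul1r.
rewrite xup_expansion raddf_sum /= mulr_sumr; apply: eq_bigr => m _.
rewrite comp_polyZ rmorphXn /= comp_polyX (exprNn 'X).
rewrite /Os intrM -pmulrn [in RHS]rmorphXn rmorphN1 -/(Ou n C m).
rewrite -!mul_polyC exprD !rmorphM /= !rmorphXn rmorphN1.
by rewrite [_%:P * _]mulrCA !mulrA.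
Qed.

Hypothesis C_neq0 : C != [ffun => false].

Lemma root_xup x :
  root (xup R n C) x <->
  x = 0 \/ exists2 j : nat, (2 <= j <= n)%N & x = - (Fj k j (Cvec' R C) / Fj k j (Cvec R C)).
Proof.
have pow_neq0 j : (2 <= j)%N -> (j.-1)%:R ^+ k != 0 :> R.
  by move=> j_ge2; rewrite expf_neq0 // pnatr_eq0; lia.
have lead_neq0 j : (2 <= j)%N -> (j.-1)%:R ^+ k * Fj k j (Cvec R C) != 0.
  by move=> j_ge2; rewrite mulf_neq0 ?pow_neq0 ?gt_eqF ?Fj_Cvec_gt0.
rewrite root_X_prod_linear => [|j]; last by rewrite mem_index_iota => /andP[/lead_neq0].
apply: or_iff_compat_l; split=> -[j]; rewrite ?mem_index_iota ?ltnS => j_range ->;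
  exists j; rewrite ?mem_index_iota ?ltnS //; case/andP: j_range => j_ge2 _;
  by rewrite invfM mulrACA divff ?mul1r ?pow_neq0.
Qed.

Lemma root_xdown x :
  root (xdown R n C) x <->
  x = 0 \/ exists2 j : nat, (2 <= j <= n)%N & x = Fj k j (Cvec' R C) / Fj k j (Cvec R C).
Proof.
have -> : root (xdown R n C) x = root (xup R n C) (- x).
  rewrite !rootE; have := horner_comp (xup R n C) (- 'X) x.
  rewrite hornerN hornerX xup_comp_oppX hornerM horner_exp hornerN hornerC => <-.
  by rewrite mulf_eq0 signr_eq0.
rewrite root_xup.
split=> [[/eqP | [j j_range /oppr_inj eq_x]] | [-> | [j j_range ->]]].
- by rewrite oppr_eq0 => /eqP; left.
- by right; exists j.
- by left; rewrite oppr0.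
- by right; exists j.
Qed.

End UpDownPolynomials.

Theorem lemma3p4 (R : realFieldType) (k n : nat) (C : {ffun 'I_k.+1 -> bool}) :
  (0 < k)%N -> (2 <= n)%N -> C != [ffun => false] ->
  [/\ xup R n C = \sum_(m < n.+1) (Ou n C m)%:R *: 'X^m,
      xdown R n C = \sum_(m < n.+1) (Os n C m)%:~R *: 'X^m,
      (forall x : R, root (xup R n C) x <->
         x = 0 \/ exists2 j : nat, (2 <= j <= n)%N &
                   x = - (Fj k j (Cvec' R C) / Fj k j (Cvec R C)))
    & (forall x : R, root (xdown R n C) x <->
         x = 0 \/ exists2 j : nat, (2 <= j <= n)%N &
                   x = Fj k j (Cvec' R C) / Fj k j (Cvec R C))].
Proof.
(* The argument does not need k > 0. *)
move=> _ n_ge2 C_neq0; have n_gt0 : (0 < n)%N by apply: leq_trans n_ge2.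
split.
- exact: xup_expansion.
- exact: xdown_expansion.
- exact: root_xup.
- exact: root_xdown.
Qed.
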